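(* Let $G_0,G_1\in\mathbb{Z}$, let $(G_n)_{n\ge0}$ satisfy $G_n=G_{n-1}+G_{n-2}$ for $n\ge2$, and let $\mu = G_1^2 - G_0 G_1 - G_0^2$. For all $k\ge 1$, $$\mathcal{G}^2_{G_0,G_1}(k) = \begin{cases} \gcd\left(G_{k+1}^2 - G_1^2,\; G_{k+2}^2 - G_2^2\right), & \text{if $k$ is even},\\ \gcd\left(2 \mu,\; G_{k+1}^2 - G_1^2,\; G_{k+2}^2 - G_2^2\right), & \text{if $k$ is odd}.\end{cases}$$
   Context: $\mathcal{G}^2_{G_0,G_1}(k)=\gcd\{\sum_{i=1}^k G_{n+i}^2 : n\ge 0\}$ (nonnegative gcd of this infinite set of integers). *)

From mathcomp Require Import all_boot all_order all_algebra.
Set Implicit Arguments. Unset Strict Implicit. Unset Printing Implicit Defensive.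
Import Order.TTheory GRing.Theory Num.Theory.
Local Open Scope ring_scope.

Definition is_gcd_of_set (S : nat -> int) (d : int) : Prop :=
  0 <= d /\ (forall n, (d %| S n)%Z) /\
  (forall e : int, (forall n, (e %| S n)%Z) -> (e %| d)%Z).

Definition sq_window_sum (G : nat -> int) (k n : nat) : int :=
  \sum_(1 <= i < k.+1) G (n + i)%N ^+ 2.

From mathcomp Require Import all_boot all_order all_algebra.
From mathcomp Require Import ring.
Import Order.TTheory GRing.Theory Num.Theory.
Local Open Scope ring_scope.

(* The window sum telescopes: S(n) = G_{n+k} G_{n+k+1} - G_n G_{n+1}, so its
   increments are T(n) = G_{n+k+1}^2 - G_{n+1}^2.  Since the squares satisfy
   a_{m+2} - 3 a_{m+1} + a_m = -2 (-1)^m mu (Cassini), the increments satisfy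
   T(n+2) = 3 T(n+1) - T(n) - 2 (-1)^n c with c = (1 - (-1)^k) mu, and
   S(0) = T(1) - 2 T(0) - c.  Hence the common divisors of all S(n) are exactly
   the common divisors of c, T(0) and T(1); c is 0 for even k and 2 mu for odd k. *)

Lemma is_gcd_of_setP (S : nat -> int) (d : int) : 0 <= d ->
  (forall e : int, (forall n, (e %| S n)%Z) <-> (e %| d)%Z) -> is_gcd_of_set S d.
Proof.
move=> d_ge0 dvdS; split=> //; split=> [|e /dvdS //].
exact/dvdS/dvdzz.
Qed.

Section FibonacciLike.

Variable G : nat -> int.
Hypothesis G_rec : forall n : nat, G n.+2 = G n.+1 + G n.

Definition fib_char : int := G 1 ^+ 2 - G 0 * G 1 - G 0 ^+ 2.

Lemma cassini m : G m.+1 ^+ 2 - G m * G m.+2 = (-1) ^+ m * fib_char.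
Proof.
elim: m => [|m IHm]; first by rewrite /fib_char G_rec; ring.
by rewrite (exprS (-1)) -mulrA -IHm !G_rec; ring.
Qed.

Lemma sqr_rec m :
  G m.+2 ^+ 2 = 3 * G m.+1 ^+ 2 - G m ^+ 2 - 2 * ((-1) ^+ m * fib_char).
Proof. by rewrite -cassini G_rec; ring. Qed.

Lemma sq_window_sumE k n :
  sq_window_sum G k n = G (n + k) * G (n + k).+1 - G n * G n.+1.
Proof.
rewrite /sq_window_sum; elim: k => [|k IHk]; first by rewrite big_geq ?addn0 ?subrr.
by rewrite big_nat_recr //= IHk !addnS G_rec; ring.
Qed.

Variable k : nat.

Definition sq_increment n : int := G (n + k).+1 ^+ 2 - G n.+1 ^+ 2.

Let c : int := (1 - (-1) ^+ k) * fib_char.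

Lemma sq_window_sumS n :
  sq_window_sum G k n.+1 = sq_window_sum G k n + sq_increment n.
Proof. by rewrite !sq_window_sumE /sq_increment addSn !G_rec; ring. Qed.

Lemma sq_window_sum0 : sq_window_sum G k 0 = sq_increment 1 - 2 * sq_increment 0 - c.
Proof.
rewrite sq_window_sumE /sq_increment /c add0n add1n mulrBl mul1r -cassini.
by rewrite /fib_char !G_rec; ring.
Qed.

Lemma sq_increment_rec n :
  sq_increment n.+2 = 3 * sq_increment n.+1 - sq_increment n - 2 * ((-1) ^+ n * c).
Proof.
rewrite /sq_increment !addSn (sqr_rec (n + k).+1) (sqr_rec n.+1) /c -addSn exprD.
by rewrite (exprS _ n); ring.
Qed.

Lemma dvdz_sq_window_sum (e : int) :
  (forall n, (e %| sq_window_sum G k n)%Z) <->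
  [&& (e %| c)%Z, (e %| sq_increment 0)%Z & (e %| sq_increment 1)%Z].
Proof.
split=> [dvdS | /and3P[dvd_c dvdT0 dvdT1]].
  have dvdT n : (e %| sq_increment n)%Z.
    have -> : sq_increment n = sq_window_sum G k n.+1 - sq_window_sum G k n.
      by rewrite sq_window_sumS; ring.
    exact: rpredB.
  have -> : c = sq_increment 1 - 2 * sq_increment 0 - sq_window_sum G k 0.
    by rewrite sq_window_sum0; ring.
  rewrite !dvdT !andbT; apply: rpredB => //.
  by apply: rpredB; rewrite ?dvdz_mull.
have dvdT n : (e %| sq_increment n)%Z && (e %| sq_increment n.+1)%Z.
  elim: n => [|n /andP[IHn IHn1]]; first by rewrite dvdT0.
  rewrite IHn1 sq_increment_rec; apply: rpredB; last exact/dvdz_mull/dvdz_mull.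
  by apply: rpredB; rewrite ?dvdz_mull.
elim=> [|n IHn]; last by rewrite sq_window_sumS rpredD //; case/andP: (dvdT n).
rewrite sq_window_sum0; apply: rpredB => //.
by apply: rpredB; rewrite ?dvdz_mull.
Qed.

End FibonacciLike.

Theorem theorem3p11 (G : nat -> int)
  (hG : forall n : nat, G n.+2 = G n.+1 + G n)
  (k : nat) (hk : (1 <= k)%N) :
  let mu := G 1%N ^+ 2 - G 0%N * G 1%N - G 0%N ^+ 2 in
  is_gcd_of_set (sq_window_sum G k)
    (if ~~ odd k then
       gcdz (G k.+1 ^+ 2 - G 1%N ^+ 2) (G k.+2 ^+ 2 - G 2%N ^+ 2)
     else
       gcdz (gcdz (2 * mu) (G k.+1 ^+ 2 - G 1%N ^+ 2)) (G k.+2 ^+ 2 - G 2%N ^+ 2)).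
Proof.
move=> mu; apply: is_gcd_of_setP; first by case: ifP.
move=> e; rewrite (dvdz_sq_window_sum G hG k) /sq_increment add0n add1n -signr_odd.
case: (odd k); rewrite /= !dvdz_gcd ?andbA.
  by rewrite -[1 - (-1) ^+ 1]/2.
by rewrite expr0 subrr mul0r dvdz0.
Qed.
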